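(* Every finitely-generated $\underline{\mathbb Z/2}$-module $M$ (i.e. with $M_\Theta$ and $M_\bullet$ finite-dimensional) is isomorphic to a direct sum of copies of $H$, $H^{op}$, $F$, $S_\bullet$ and $S_\Theta$. The number of summands of each type is uniquely determined: letting $f$ be the rank of $1+t\colon M_\Theta\to M_\Theta$, the number of $F$ summands is $f$; the number of $H^{op}$ summands is $\dim M_\Theta-f-\dim\ker p_*$; the number of $H$ summands is $\dim M_\bullet-\dim\ker p^*-f$; the number of $S_\bullet$ summands is $\dim\ker p^*-\dim M_\Theta+f+\dim\ker p_*$; and the number of $S_\Theta$ summands is $\dim\ker p_*-\dim M_\bullet+\dim\ker p^*$.
   Context: A $\underline{\mathbb Z/2}$-module is a pair of $\mathbb F_2$-vector spaces $M_\Theta,M_\bullet$ with linear maps $t\colon M_\Theta\to M_\Theta$, $p^*\colon M_\bullet\to M_\Theta$, $p_*\colon M_\Theta\to M_\bullet$ satisfying $tp^*=p^*$, $p_*t=p_*$, $t^2=1$, $p^*p_*=1+t$ and $p_*p^*=0$; dimensions are over $\mathbb F_2$. The modules: $H$ has both spaces $\mathbb F_2$, $t=p^*=\mathrm{id}$, $p_*=0$; $H^{op}$ has both spaces $\mathbb F_2$, $t=p_*=\mathrm{id}$, $p^*=0$; $F$ has $F_\Theta=\mathbb F_2^2$ with $t$ the swap, $F_\bullet=\mathbb F_2$, $p_*(x,y)=x+y$, $p^*(z)=(z,z)$; $S_\bullet$ has $(S_\bullet)_\Theta=0$, $(S_\bullet)_\bullet=\mathbb F_2$; $S_\Theta$ has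 $(S_\Theta)_\Theta=\mathbb F_2$ with $t=\mathrm{id}$ and $(S_\Theta)_\bullet=0$. *)

From mathcomp Require Import all_boot all_order all_algebra.
Set Implicit Arguments. Unset Strict Implicit. Unset Printing Implicit Defensive.
Import GRing.Theory.
Local Open Scope ring_scope.

(* A Z/2-module (Mackey-functor style) with finite-dimensional F_2 spaces,
   in coordinates: M_Theta = F_2^dT, M_bullet = F_2^dB, linear maps act on
   ROW vectors on the right (x |-> x *m A), so composition g o f is
   (matrix of f) *m (matrix of g).
   tm : M_Theta -> M_Theta, ps = p^* : M_bullet -> M_Theta,
   pl = p_* : M_Theta -> M_bullet. *)
Record z2data := Z2D {
  dT : nat; dB : nat;
  tm : 'M['F_2]_dT;
  ps : 'M['F_2]_(dB, dT);
  pl : 'M['F_2]_(dT, dB) }.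

Definition is_Z2mod (M : z2data) : Prop :=
  [/\ ps M *m tm M = ps M,
      tm M *m pl M = pl M,
      tm M *m tm M = 1%:M,
      pl M *m ps M = 1%:M + tm M
    & ps M *m pl M = 0].

Definition z2iso (M N : z2data) : Prop :=
  exists (a : 'M['F_2]_(dT M, dT N)) (a' : 'M['F_2]_(dT N, dT M))
         (b : 'M['F_2]_(dB M, dB N)) (b' : 'M['F_2]_(dB N, dB M)),
    [/\ a *m a' = 1%:M, a' *m a = 1%:M, b *m b' = 1%:M & b' *m b = 1%:M] /\
    [/\ tm M *m a = a *m tm N,
        ps M *m a = b *m ps N
      & pl M *m b = a *m pl N].

Definition z2sum (M N : z2data) : z2data :=
  Z2D (block_mx (tm M) 0 0 (tm N))
      (block_mx (ps M) 0 0 (ps N))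
      (block_mx (pl M) 0 0 (pl N)).

Definition z2zero : z2data := @Z2D 0 0 0 0 0.

Fixpoint z2pow (n : nat) (M : z2data) : z2data :=
  match n with 0 => z2zero | n'.+1 => z2sum M (z2pow n' M) end.

Definition modH : z2data := @Z2D 1 1 1%:M 1%:M 0.
Definition modHop : z2data := @Z2D 1 1 1%:M 0 1%:M.
(* F : F_Theta = F_2^2, t = swap, F_bullet = F_2, p_*(x,y) = x+y, p^* z = (z,z) *)
Definition modF : z2data :=
  @Z2D 2 1 (\matrix_(i < 2, j < 2) (if i == j then 0 else 1))
           (const_mx 1) (const_mx 1).
Definition modSb : z2data := @Z2D 0 1 0 0 0.
Definition modSt : z2data := @Z2D 1 0 1%:M 0 0.

Definition z2std (h ho f sb st : nat) : z2data :=
  z2sum (z2pow h modH) (z2sum (z2pow ho modHop)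
    (z2sum (z2pow f modF) (z2sum (z2pow sb modSb) (z2pow st modSt)))).

From mathcomp Require Import all_boot all_order all_algebra.
From mathcomp Require Import zify.
Set Implicit Arguments. Unset Strict Implicit. Unset Printing Implicit Defensive.
Import GRing.Theory.
Local Open Scope ring_scope.

(* If t <> 1, there are x, z with x z = 1 and x t z = 0; then x
   and x t span a copy of F whose inclusion is split by (z, t z).  If t = 1, a
   vector on which p^* (resp. p_* ) does not vanish spans a split copy of H
   (resp. H^op), and if moreover p^* = p_* = 0 any vector spans a split S_Theta
   or S_bullet.  A split summand X of M has a complement, the image of the
   idempotent 1 - c u, so induction on dim M_Theta + dim M_bullet decomposes M.
   Uniqueness.  dim M_Theta, dim M_bullet and the ranks of 1 + t, p^*, p_* are
   additive isomorphism invariants; on H, H^op, F, S_bullet, S_Theta they take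
   the values (1,1,0,1,0), (1,1,0,0,1), (2,1,1,1,1), (0,1,0,0,0), (1,0,0,0,0),
   which determine the five multiplicities. *)

Section MatrixFacts.

Variable F : fieldType.

Lemma mulmx_inv_transport m n p q (a : 'M[F]_(m, n)) a' (b : 'M_(p, q)) b'
    (X : 'M_(p, m)) (Y : 'M_(q, n)) :
  a *m a' = 1%:M -> b' *m b = 1%:M -> X *m a = b *m Y -> b' *m X = Y *m a'.
Proof.
move=> aa' b'b XY.
by rewrite -[b' *m X]mulmx1 -aa' !mulmxA -(mulmxA b') XY mulmxA b'b mul1mx.
Qed.

Lemma mxrank_equiv m n p q (X : 'M[F]_(m, n)) (Y : 'M_(p, q)) a b b' :
  row_free a -> b' *m b = 1%:M -> X *m a = b *m Y -> \rank X = \rank Y.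
Proof.
move=> a_free b'b XY; apply/eqP; rewrite eqn_leq; apply/andP; split.
  by rewrite -(mxrankMfree X a_free) XY mxrankM_maxr.
rewrite -[Y]mul1mx -b'b -mulmxA -XY mulmxA.
exact: leq_trans (mxrankM_maxl _ _) (mxrankM_maxr _ _).
Qed.

Lemma mx_neq0_witness m n (A : 'M[F]_(m, n)) :
  A != 0 -> exists (x : 'rV_m) (z : 'cV_n), x *m A *m z = 1%:M.
Proof.
move=> nzA; have /existsP [[i j] /= nzAij] : [exists ij, A ij.1 ij.2 != 0].
  apply: contraR nzA => /existsPn A0; apply/eqP/matrixP => i j.
  by move: (A0 (i, j)); rewrite negbK mxE => /eqP.
exists ((A i j)^-1 *: delta_mx 0 i), (delta_mx j 0).
rewrite -!scalemxAl -rowE -colE; apply/matrixP => k l.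
by rewrite !ord1 !mxE mulVf.
Qed.

Lemma exists_rV_cV_mul1 n : (0 < n)%N ->
  exists (x : 'rV[F]_n) (z : 'cV_n), x *m z = 1%:M.
Proof.
case: n => // n _; exists (delta_mx 0 0), (delta_mx 0 0).
by rewrite mul_delta_mx; apply/matrixP => i j; rewrite !ord1 !mxE.
Qed.

Lemma mxrank_const1 m n : \rank (const_mx 1 : 'M[F]_(m.+1, n.+1)) = 1%N.
Proof.
apply/eqP; rewrite eqn_leq lt0n mxrank_eq0; apply/andP; split.
  have -> : const_mx 1 =
      (const_mx 1 : 'M[F]_(m.+1, 1)) *m (const_mx 1 : 'M_(1, n.+1)).
    by apply/matrixP => i j; rewrite !mxE big_ord1 !mxE mulr1.
  exact: leq_trans (mxrankM_maxr _ _) (rank_leq_row _).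
by apply/eqP => /matrixP /(_ 0 0) /eqP; rewrite !mxE oner_eq0.
Qed.

Lemma mulmx_idempotent_factor n r (d : 'M[F]_(n, r)) d' v v' :
  d' *m d = 1%:M -> v *m v' = 1%:M -> d *m v *m (d *m v) = d *m v ->
  v *m d = 1%:M.
Proof.
move=> d'd vv' dv_idem.
transitivity (d' *m (d *m v *m (d *m v)) *m v').
  by rewrite !mulmxA d'd mul1mx -mulmxA vv' mulmx1.
by rewrite dv_idem !mulmxA d'd mul1mx vv'.
Qed.

Lemma mx_complement k n (u : 'M[F]_(k, n)) (c : 'M_(n, k)) : u *m c = 1%:M ->
  exists r (v : 'M_(r, n)) (d : 'M_(n, r)),
    [/\ v *m c = 0, u *m d = 0, v *m d = 1%:M & c *m u + d *m v = 1%:M].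
Proof.
move=> uc; pose e := 1%:M - c *m u.
have ee : e *m e = e.
  by rewrite mulmxBl mul1mx mulmxBr mulmx1 mulmxA -(mulmxA c) uc mulmx1 subrr subr0.
have [d' d'd] := row_fullP (col_base_full e).
have [v' vv'] := row_freeP (row_base_free e).
exists (\rank e), (row_base e), (col_base e); split.
- rewrite -[_ *m c]mul1mx -d'd -mulmxA (mulmxA (col_base e)) mulmx_base.
  by rewrite mulmxBl mul1mx -mulmxA uc mulmx1 subrr mulmx0.
- rewrite -[_ *m col_base e]mulmx1 -vv' mulmxA -(mulmxA u) mulmx_base.
  by rewrite mulmxBr mulmx1 mulmxA uc mul1mx subrr mul0mx.
- by apply: mulmx_idempotent_factor d'd vv' _; rewrite mulmx_base.
- by rewrite mulmx_base addrC subrK.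
Qed.

Lemma mulmx_complement_factor m n k r (w : 'M[F]_(m, n)) (c : 'M_(n, k)) u
    (d : 'M_(n, r)) v :
  w *m c = 0 -> c *m u + d *m v = 1%:M -> w = w *m d *m v.
Proof.
by move=> wc cudv; rewrite -{1}[w]mulmx1 -cudv mulmxDr !mulmxA wc mul0mx add0r.
Qed.

End MatrixFacts.

Lemma F2_oppmx m n (A : 'M['F_2]_(m, n)) : - A = A.
Proof. by apply/matrixP => i j; rewrite mxE oppr_pchar2 // pchar_Fp. Qed.

Lemma F2_addmx_eq0 m n (A B : 'M['F_2]_(m, n)) : (A + B == 0) = (A == B).
Proof. by rewrite -{1}[B]F2_oppmx subr_eq0. Qed.

Lemma F2_addmm m n (A : 'M['F_2]_(m, n)) : A + A = 0.
Proof. by apply/eqP; rewrite F2_addmx_eq0. Qed.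

Lemma F2_mx11 (a : 'M['F_2]_1) : a = 0 \/ a = 1%:M.
Proof.
rewrite [a]mx11_scalar; case: (a 0 0) => -[|[|//]] ai.
  by left; rewrite (_ : Ordinal ai = 0) ?raddf0 //; apply: val_inj.
by right; congr (_%:M); apply: val_inj.
Qed.

Lemma F2_involution_witness n (t : 'M['F_2]_n) :
  t *m t = 1%:M -> t != 1%:M ->
  exists (x : 'rV_n) (z : 'cV_n), x *m z = 1%:M /\ x *m t *m z = 0.
Proof.
move=> tt t_neq1; have nz1t : 1%:M + t != 0 by rewrite F2_addmx_eq0 eq_sym.
have [x [z]] := mx_neq0_witness nz1t; rewrite mulmxDr mulmx1 mulmxDl => xz_xtz.
have [xtz0|xtz1] := F2_mx11 (x *m t *m z).
  by exists x, z; rewrite -xz_xtz xtz0 addr0.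
exists (x *m t), z; split=> //.
rewrite -(mulmxA x) tt mulmx1; apply: (addIr 1%:M).
by rewrite -{1}xtz1 xz_xtz add0r.
Qed.

Definition z2hom (M N : z2data)
    (a : 'M['F_2]_(dT M, dT N)) (b : 'M_(dB M, dB N)) :=
  [/\ tm M *m a = a *m tm N, ps M *m a = b *m ps N & pl M *m b = a *m pl N].
Arguments z2hom : clear implicits.

Lemma z2hom1 M : z2hom M M 1%:M 1%:M.
Proof. by split; rewrite mulmx1 mul1mx. Qed.

Lemma z2homM M N P a b c d :
  z2hom M N a b -> z2hom N P c d -> z2hom M P (a *m c) (b *m d).
Proof.
move=> [Ht Hs Hl] [Kt Ks Kl].
by split; rewrite mulmxA ?Ht ?Hs ?Hl -!mulmxA ?Kt ?Ks ?Kl.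
Qed.

Lemma z2hom_inv M N a a' b b' :
  a *m a' = 1%:M -> a' *m a = 1%:M -> b *m b' = 1%:M -> b' *m b = 1%:M ->
  z2hom M N a b -> z2hom N M a' b'.
Proof.
move=> aa' a'a bb' b'b [Ht Hs Hl]; split; symmetry.
- exact: mulmx_inv_transport aa' a'a Ht.
- exact: mulmx_inv_transport aa' b'b Hs.
- exact: mulmx_inv_transport bb' a'a Hl.
Qed.

Lemma z2hom_block M1 M2 N1 N2 a1 b1 a2 b2 :
  z2hom M1 N1 a1 b1 -> z2hom M2 N2 a2 b2 ->
  z2hom (z2sum M1 M2) (z2sum N1 N2) (block_mx a1 0 0 a2) (block_mx b1 0 0 b2).
Proof.
move=> [Ht Hs Hl] [Kt Ks Kl].
by split; rewrite /= !mulmx_block !mulmx0 !mul0mx !addr0 !add0r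
  ?Ht ?Hs ?Hl ?Kt ?Ks ?Kl.
Qed.

Lemma z2hom_col X Y M u u2 v v2 :
  z2hom X M u u2 -> z2hom Y M v v2 ->
  z2hom (z2sum X Y) M (col_mx u v) (col_mx u2 v2).
Proof.
move=> [Ht Hs Hl] [Kt Ks Kl].
by split; rewrite /= mul_block_col !mul0mx addr0 add0r mul_col_mx
  ?Ht ?Hs ?Hl ?Kt ?Ks ?Kl.
Qed.

Lemma z2iso_refl M : z2iso M M.
Proof.
by exists 1%:M, 1%:M, 1%:M, 1%:M; split; [rewrite !mulmx1 | exact: z2hom1].
Qed.

Lemma z2iso_sym M N : z2iso M N -> z2iso N M.
Proof.
move=> [a [a' [b [b' [[aa' a'a bb' b'b] hom]]]]].
by exists a', a, b', b; split=> //; apply: z2hom_inv hom.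
Qed.

Lemma z2iso_trans M N P : z2iso M N -> z2iso N P -> z2iso M P.
Proof.
move=> [a [a' [b [b' [[aa' a'a bb' b'b] homMN]]]]].
move=> [c [c' [d [d' [[cc' c'c dd' d'd] homNP]]]]].
exists (a *m c), (c' *m a'), (b *m d), (d' *m b').
split; last exact: z2homM homMN homNP; split.
- by rewrite -mulmxA (mulmxA c) cc' mul1mx.
- by rewrite -mulmxA (mulmxA a') a'a mul1mx.
- by rewrite -mulmxA (mulmxA d) dd' mul1mx.
- by rewrite -mulmxA (mulmxA b') b'b mul1mx.
Qed.

Lemma z2iso_sum M1 M2 N1 N2 :
  z2iso M1 N1 -> z2iso M2 N2 -> z2iso (z2sum M1 M2) (z2sum N1 N2).
Proof.
move=> [a1 [a1' [b1 [b1' [[e1 e2 e3 e4] hom1]]]]].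
move=> [a2 [a2' [b2 [b2' [[f1 f2 f3 f4] hom2]]]]].
exists (block_mx a1 0 0 a2), (block_mx a1' 0 0 a2').
exists (block_mx b1 0 0 b2), (block_mx b1' 0 0 b2'); split; last exact: z2hom_block.
by split; rewrite mulmx_block !mulmx0 !mul0mx !addr0 !add0r
  ?e1 ?e2 ?e3 ?e4 ?f1 ?f2 ?f3 ?f4 -scalar_mx_block.
Qed.

Lemma z2iso_sumC M N : z2iso (z2sum M N) (z2sum N M).
Proof.
pose s m n : 'M['F_2]_(m + n, n + m) := block_mx 0 1%:M 1%:M 0.
have ss m n : s m n *m s n m = 1%:M.
  by rewrite mulmx_block !mulmx0 !mul0mx !mulmx1 !addr0 !add0r -scalar_mx_block.
exists (s _ _), (s _ _), (s _ _), (s _ _); split; first by split; apply: ss.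
by split; rewrite /= !mulmx_block !mulmx0 !mul0mx !mulmx1 !mul1mx !addr0 !add0r.
Qed.

Lemma z2iso_castmx M N (eT : dT M = dT N) (eB : dB M = dB N) :
  tm N = castmx (eT, eT) (tm M) -> ps N = castmx (eB, eT) (ps M) ->
  pl N = castmx (eT, eB) (pl M) -> z2iso M N.
Proof.
case: M N eT eB => m1 n1 t1 s1 l1 [m2 n2 t2 s2 l2] /= eT eB.
case: m2 / eT t2 s2 l2; case: n2 / eB => t2 s2 l2.
by rewrite !castmx_id => -> -> ->; apply: z2iso_refl.
Qed.

Lemma z2iso_sumA A B C : z2iso (z2sum (z2sum A B) C) (z2sum A (z2sum B C)).
Proof.
apply: (@z2iso_castmx (z2sum (z2sum A B) C) (z2sum A (z2sum B C))
         (esym (addnA (dT A) (dT B) (dT C))) (esym (addnA (dB A) (dB B) (dB C)))) => /=;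
by rewrite -[0 in LHS]row_mx0 -[0 in X in block_mx _ _ X _]col_mx0 block_mxA /=
  row_mx0 col_mx0.
Qed.

Lemma z2iso_sumCA A B C : z2iso (z2sum A (z2sum B C)) (z2sum B (z2sum A C)).
Proof.
apply: z2iso_trans (z2iso_sym (z2iso_sumA A B C)) _.
apply: z2iso_trans (z2iso_sum (z2iso_sumC A B) (z2iso_refl C)) _.
exact: z2iso_sumA.
Qed.

Lemma z2iso_dim0 M N :
  dT M = 0%N -> dB M = 0%N -> dT N = 0%N -> dB N = 0%N -> z2iso M N.
Proof.
case: M N => m1 n1 t1 s1 l1 [m2 n2 t2 s2 l2] /= eT1 eB1 eT2 eB2; subst.
by exists 0, 0, 0, 0; split; split; apply/matrixP => -[].
Qed.

Lemma z2mod_hom_free N M a b :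
  is_Z2mod M -> z2hom N M a b -> row_free a -> row_free b -> is_Z2mod N.
Proof.
move=> [m1 m2 m3 m4 m5] [Ht Hs Hl] /row_free_inj a_inj /row_free_inj b_inj.
split.
- by apply: (a_inj _) => /=; rewrite -mulmxA Ht mulmxA Hs -mulmxA m1.
- by apply: (b_inj _) => /=; rewrite -mulmxA Hl mulmxA Ht -mulmxA m2.
- by apply: (a_inj _) => /=; rewrite -mulmxA Ht mulmxA Ht -mulmxA m3 mulmx1 mul1mx.
- apply: (a_inj _) => /=; rewrite -mulmxA Hs mulmxA Hl -mulmxA m4.
  by rewrite mulmxDr mulmxDl mulmx1 mul1mx Ht.
- by apply: (b_inj _) => /=; rewrite -mulmxA Hl mulmxA Hs -mulmxA m5 mulmx0 mul0mx.
Qed.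

Definition z2retract (X M : z2data) :=
  exists u u2 c c2, [/\ z2hom X M u u2, z2hom M X c c2,
                        u *m c = 1%:M & u2 *m c2 = 1%:M].

Lemma z2retract_summand X M : is_Z2mod M -> z2retract X M ->
  exists2 M', is_Z2mod M' & z2iso (z2sum X M') M.
Proof.
move=> HM [u [u2 [c [c2 [homu homc uc uc2]]]]].
have [r [v [d [vc ud vd cudv]]]] := mx_complement uc.
have [r2 [v2 [d2 [vc2 ud2 vd2 cudv2]]]] := mx_complement uc2.
have [Ct Cs Cl] := homc.
pose M' := Z2D (v *m tm M *m d) (v2 *m ps M *m d) (v *m pl M *m d2).
have homv : z2hom M' M v v2.
  split; symmetry.
  - by apply: mulmx_complement_factor cudv; rewrite -mulmxA Ct mulmxA vc mul0mx.
  - by apply: mulmx_complement_factor cudv; rewrite -mulmxA Cs mulmxA vc2 mul0mx.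
  - by apply: mulmx_complement_factor cudv2; rewrite -mulmxA Cl mulmxA vc mul0mx.
exists M'.
  by apply: z2mod_hom_free HM homv _ _; apply/row_freeP; [exists d | exists d2].
exists (col_mx u v), (row_mx c d), (col_mx u2 v2), (row_mx c2 d2).
split; last exact: z2hom_col.
by split; rewrite ?mul_col_row ?mul_row_col ?uc ?ud ?vc ?vd ?uc2 ?ud2 ?vc2 ?vd2
  -?scalar_mx_block.
Qed.

(* Dimension 1 + 1 rather than 2, so that the block-matrix lemmas match. *)
Lemma modF_blocks : modF =
  @Z2D (1 + 1) 1 (block_mx 0 1%:M 1%:M 0) (row_mx 1%:M 1%:M) (col_mx 1%:M 1%:M).
Proof.
congr Z2D.
- apply/(@matrixP _ (1 + 1) (1 + 1)) => i j.
  by case: (split_ordP i) => i' ->; case: (split_ordP j) => j' ->;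
    rewrite ?block_mxEul ?block_mxEur ?block_mxEdl ?block_mxEdr !mxE !ord1.
- apply/(@matrixP _ 1 (1 + 1)) => i j; rewrite [i]ord1.
  by case: (split_ordP j) => j' ->; rewrite ?row_mxEl ?row_mxEr !mxE [j']ord1.
- apply/(@matrixP _ (1 + 1) 1 (const_mx 1)) => i j; rewrite [j]ord1.
  by case: (split_ordP i) => i' ->; rewrite ?col_mxEu ?col_mxEd !mxE [i']ord1.
Qed.

Lemma z2retract_F M (x : 'rV['F_2]_(dT M)) (z : 'cV_(dT M)) : is_Z2mod M ->
  x *m z = 1%:M -> x *m tm M *m z = 0 -> z2retract modF M.
Proof.
move=> [m1 m2 m3 m4 m5] xz xtz; rewrite modF_blocks.
exists (col_mx x (x *m tm M)), (x *m pl M), (row_mx z (tm M *m z)), (ps M *m z).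
split.
- split=> /=.
  + by rewrite mul_block_col mul_col_mx !mul0mx !mul1mx add0r addr0 -mulmxA m3 mulmx1.
  + by rewrite mul_row_col !mul1mx -mulmxA m4 mulmxDr mulmx1.
  + by rewrite !mul_col_mx !mul1mx -mulmxA m2.
- split=> /=.
  + by rewrite mul_mx_row mul_row_block !mulmx0 !mulmx1 add0r addr0 mulmxA m3 mul1mx.
  + by rewrite !mul_mx_row !mulmx1 mulmxA m1.
  + by rewrite mul_row_col !mulmx1 mulmxA m4 mulmxDl mul1mx.
- by rewrite mul_col_row !mulmxA xtz -(mulmxA x) m3 mulmx1 xz -scalar_mx_block.
- by rewrite mulmxA -(mulmxA x) m4 mulmxDr mulmx1 mulmxDl xz xtz addr0.
Qed.

Lemma z2retract_H M (w : 'rV['F_2]_(dB M)) (z : 'cV_(dT M)) : is_Z2mod M ->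
  tm M = 1%:M -> w *m ps M *m z = 1%:M -> z2retract modH M.
Proof.
move=> [m1 _ _ m4 m5] t1 wpsz.
have pl_ps0 : pl M *m ps M = 0 by rewrite m4 t1 F2_addmm.
exists (w *m ps M), w, z, (ps M *m z); split=> //=; last by rewrite mulmxA.
- by split; rewrite ?mul1mx ?mul0mx // -mulmxA ?m1 ?m5 ?mulmx0.
- by split; rewrite ?mulmx1 ?mulmx0 // ?t1 ?mul1mx // mulmxA pl_ps0 mul0mx.
Qed.

Lemma z2retract_Hop M (x : 'rV['F_2]_(dT M)) (z : 'cV_(dB M)) : is_Z2mod M ->
  tm M = 1%:M -> x *m pl M *m z = 1%:M -> z2retract modHop M.
Proof.
move=> [_ m2 _ m4 m5] t1 xplz.
have pl_ps0 : pl M *m ps M = 0 by rewrite m4 t1 F2_addmm.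
exists x, (x *m pl M), (pl M *m z), z; split=> //=; last by rewrite mulmxA.
- by split; rewrite ?mul1mx ?mul0mx ?t1 ?mulmx1 // -mulmxA pl_ps0 mulmx0.
- by split; rewrite ?mulmx1 ?mulmx0 // ?mulmxA ?m2 ?m5 ?mul0mx.
Qed.

Lemma z2retract_St M (x : 'rV['F_2]_(dT M)) (z : 'cV_(dT M)) :
  tm M = 1%:M -> ps M = 0 -> pl M = 0 -> x *m z = 1%:M -> z2retract modSt M.
Proof.
move=> t1 ps0 pl0 xz; exists x, 0, z, 0; split=> //=.
- by split; rewrite ?t1 ?pl0 ?mul1mx ?mulmx1 ?mul0mx ?mulmx0.
- by split; rewrite ?t1 ?ps0 ?mul1mx ?mulmx1 ?mul0mx ?mulmx0.
- by apply/matrixP => -[].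
Qed.

Lemma z2retract_Sb M (w : 'rV['F_2]_(dB M)) (z : 'cV_(dB M)) :
  ps M = 0 -> pl M = 0 -> w *m z = 1%:M -> z2retract modSb M.
Proof.
move=> ps0 pl0 wz; exists 0, w, 0, z; split=> //=.
- by split; rewrite ?ps0 ?mul0mx ?mulmx0.
- by split; rewrite ?pl0 ?mul0mx ?mulmx0.
- by apply/matrixP => -[].
Qed.

Inductive z2basic : z2data -> Prop :=
  | z2basicH : z2basic modH
  | z2basicHop : z2basic modHop
  | z2basicF : z2basic modF
  | z2basicSb : z2basic modSb
  | z2basicSt : z2basic modSt.

Lemma z2basic_dim_gt0 X : z2basic X -> (0 < dT X + dB X)%N.
Proof. by case. Qed.

Lemma z2mod_basic_retract M : is_Z2mod M -> (0 < dT M + dB M)%N ->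
  exists2 X, z2basic X & z2retract X M.
Proof.
move=> HM dim_gt0; have [_ _ tt _ _] := HM.
have [t1|t_neq1] := eqVneq (tm M) 1%:M; last first.
  have [x [z [xz xtz]]] := F2_involution_witness tt t_neq1.
  by exists modF; [exact: z2basicF | exact: z2retract_F HM xz xtz].
have [ps0|/mx_neq0_witness [w [z wpsz]]] := eqVneq (ps M) 0; last first.
  by exists modH; [exact: z2basicH | exact: z2retract_H HM t1 wpsz].
have [pl0|/mx_neq0_witness [x [z xplz]]] := eqVneq (pl M) 0; last first.
  by exists modHop; [exact: z2basicHop | exact: z2retract_Hop HM t1 xplz].
have [dT0|/(@exists_rV_cV_mul1 'F_2) [x [z xz]]] := posnP (dT M); last first.
  by exists modSt; [exact: z2basicSt | exact: z2retract_St t1 ps0 pl0 xz].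
have [w [z wz]] : exists (w : 'rV['F_2]_(dB M)) (z : 'cV_(dB M)), w *m z = 1%:M.
  by apply: exists_rV_cV_mul1; move: dim_gt0; rewrite dT0.
by exists modSb; [exact: z2basicSb | exact: z2retract_Sb ps0 pl0 wz].
Qed.

Lemma z2iso_sumCA_r X P Y Y' :
  z2iso (z2sum X Y) Y' -> z2iso (z2sum X (z2sum P Y)) (z2sum P Y').
Proof.
by move=> XY; apply: z2iso_trans (z2iso_sumCA X P Y) (z2iso_sum (z2iso_refl P) XY).
Qed.

Lemma z2iso_sum_powS X k R :
  z2iso (z2sum X (z2sum (z2pow k X) R)) (z2sum (z2pow k.+1 X) R).
Proof. exact: z2iso_sym (z2iso_sumA _ _ _). Qed.

Lemma z2iso_basic_sum_std X h ho f sb st : z2basic X ->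
  exists h' ho' f' sb' st',
    z2iso (z2sum X (z2std h ho f sb st)) (z2std h' ho' f' sb' st').
Proof.
case.
- by exists h.+1, ho, f, sb, st; apply: z2iso_sum_powS.
- by exists h, ho.+1, f, sb, st; apply: z2iso_sumCA_r; apply: z2iso_sum_powS.
- by exists h, ho, f.+1, sb, st; do 2 apply: z2iso_sumCA_r; apply: z2iso_sum_powS.
- by exists h, ho, f, sb.+1, st; do 3 apply: z2iso_sumCA_r; apply: z2iso_sum_powS.
- by exists h, ho, f, sb, st.+1; do 4 apply: z2iso_sumCA_r; apply: z2iso_refl.
Qed.

Lemma z2iso_invariants M N : z2iso M N ->
  [/\ dT M = dT N, dB M = dB N, \rank (1%:M + tm M)%R = \rank (1%:M + tm N)%R,
      \rank (ps M) = \rank (ps N) & \rank (pl M) = \rank (pl N)].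
Proof.
move=> [a [a' [b [b' [[aa' a'a bb' b'b] [Ht Hs Hl]]]]]].
have a_free : row_free a by apply/row_freeP; exists a'.
have b_free : row_free b by apply/row_freeP; exists b'.
split.
- by apply/eqP; rewrite eqn_leq (mulmx1_min aa') (mulmx1_min a'a).
- by apply/eqP; rewrite eqn_leq (mulmx1_min bb') (mulmx1_min b'b).
- by apply: (mxrank_equiv a_free a'a); rewrite mulmxDl mulmxDr mul1mx mulmx1 Ht.
- exact: mxrank_equiv a_free b'b Hs.
- exact: mxrank_equiv b_free a'a Hl.
Qed.

Lemma z2mod_decomposition M : is_Z2mod M ->
  exists h ho f sb st, z2iso M (z2std h ho f sb st).
Proof.
have [n] := ubnP (dT M + dB M); elim: n M => // n IHn M /ltnSE dimMn HM.
have [dim0|dim_gt0] := posnP (dT M + dB M).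
  by exists 0%N, 0%N, 0%N, 0%N, 0%N; apply: z2iso_dim0 => //; lia.
have [X basicX] := z2mod_basic_retract HM dim_gt0.
move=> /(z2retract_summand HM) [M' HM' XM'_M].
have dimM'n : (dT M' + dB M' < n)%N.
  have [/= eT eB _ _ _] := z2iso_invariants XM'_M.
  by have := z2basic_dim_gt0 basicX; lia.
have [h [ho [f [sb [st M'_std]]]]] := IHn M' dimM'n HM'.
have [h' [ho' [f' [sb' [st' X_std]]]]] := z2iso_basic_sum_std h ho f sb st basicX.
exists h', ho', f', sb', st'; apply: z2iso_trans (z2iso_sym XM'_M) _.
exact: z2iso_trans (z2iso_sum (z2iso_refl X) M'_std) X_std.
Qed.

Definition z2additive (phi : z2data -> nat) :=
  phi z2zero = 0%N /\ forall M N, phi (z2sum M N) = (phi M + phi N)%N.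

Lemma z2additive_pow phi k M : z2additive phi -> phi (z2pow k M) = (k * phi M)%N.
Proof. by move=> [phi0 phiD]; elim: k => [|k IHk] //=; rewrite phiD IHk mulSn. Qed.

Lemma z2additive_std phi h ho f sb st : z2additive phi ->
  phi (z2std h ho f sb st) = (h * phi modH + ho * phi modHop + f * phi modF
                              + sb * phi modSb + st * phi modSt)%N.
Proof.
move=> phi_add; have [_ phiD] := phi_add.
by rewrite !phiD !z2additive_pow // !addnA.
Qed.

Lemma z2additive_rank_1t : z2additive (fun M => \rank (1%:M + tm M)%R).
Proof.
split=> [|M N] /=; first by rewrite addr0 mxrank1.
by rewrite [1%:M]scalar_mx_block add_block_mx !addr0 rank_diag_block_mx.
Qed.

Lemma z2additive_rank_ps : z2additive (fun M => \rank (ps M)).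
Proof. by split=> [|M N]; [apply: mxrank0 | apply: rank_diag_block_mx]. Qed.

Lemma z2additive_rank_pl : z2additive (fun M => \rank (pl M)).
Proof. by split=> [|M N]; [apply: mxrank0 | apply: rank_diag_block_mx]. Qed.

Lemma modF_1t : 1%:M + tm modF = const_mx 1.
Proof. by apply/matrixP => i j; rewrite !mxE; case: eqP; rewrite ?addr0 ?add0r. Qed.

Lemma z2std_invariants h ho f sb st :
  let S := z2std h ho f sb st in
  [/\ dT S = (h + ho + 2 * f + st)%N, dB S = (h + ho + f + sb)%N,
      \rank (1%:M + tm S)%R = f, \rank (ps S) = (h + f)%N
    & \rank (pl S) = (ho + f)%N].
Proof.
have one11 : 1%:M + 1%:M = 0 :> 'M['F_2]_1 by apply: F2_addmm.
split.
- by rewrite z2additive_std //=; lia.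
- by rewrite z2additive_std //=; lia.
- have := z2additive_std h ho f sb st z2additive_rank_1t; rewrite /= => ->.
  by rewrite one11 modF_1t mxrank0 mxrank_const1 addr0 mxrank1; lia.
- have := z2additive_std h ho f sb st z2additive_rank_ps; rewrite /= => ->.
  by rewrite mxrank1 !mxrank0 mxrank_const1; lia.
- have := z2additive_std h ho f sb st z2additive_rank_pl; rewrite /= => ->.
  by rewrite mxrank1 !mxrank0 mxrank_const1; lia.
Qed.

Theorem proposition3p9 (M : z2data) :
  is_Z2mod M ->
  (exists h ho f sb st : nat, z2iso M (z2std h ho f sb st)) /\
  (forall h ho f sb st : nat, z2iso M (z2std h ho f sb st) ->
     let fr := \rank ((1%:M + tm M)%R) in
     let kps := \rank (kermx (ps M)) in
     let kpl := \rank (kermx (pl M)) in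
     [/\ f = fr,
         ho%:Z = (dT M)%:Z - fr%:Z - kpl%:Z,
         h%:Z = (dB M)%:Z - kps%:Z - fr%:Z,
         sb%:Z = kps%:Z - (dT M)%:Z + fr%:Z + kpl%:Z
       & st%:Z = kpl%:Z - (dB M)%:Z + kps%:Z]).
Proof.
move=> HM; split; first exact: z2mod_decomposition.
move=> h ho f sb st /z2iso_invariants [eT eB eR eS eL] fr kps kpl.
have [sT sB sR sS sL] := z2std_invariants h ho f sb st.
rewrite /kps /kpl /fr !mxrank_ker eR eS eL sR sS sL eT eB sT sB.
by split; lia.
Qed.
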